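(* There exists a universal constant $C > 0$ such that for all $p \in (0,1)$, all $n \in \mathbb{N}_+$ and every $z \in \{0,1\}^{2n}$ with an even number of ones, we have $\mathcal{D}_{p,2n}(z) \geq C \cdot \mu_{p,2n}(z)$.
   Context: $\mu_{p,m}$ is the product $p$-biased distribution on $\{0,1\}^m$ (each coordinate equals $1$ independently with probability $p$), and $\mu_{p,m}(z)$ is the probability of $z$. The pull-back distribution $\mathcal{D}_{p,2n}$ on $\{0,1\}^{2n}$ is the distribution of $z$ obtained as follows: draw a uniformly random $2$-to-$1$ map $\pi : [2n] \to [n]$ (every element of $[n]$ has exactly two preimages), draw $x \sim \mu_{p,n}$ independently, and set $z_i = x_{\pi(i)}$ for all $i \in [2n]$; $\mathcal{D}_{p,2n}(z)$ denotes the probability of $z$. *)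

From HB Require Import structures.
From mathcomp Require Import all_boot all_order all_algebra.
From mathcomp Require Import reals.
Set Implicit Arguments. Unset Strict Implicit. Unset Printing Implicit Defensive.
Import Order.TTheory GRing.Theory Num.Theory.
Local Open Scope ring_scope.

Definition mu (R : realType) (p : R) (m : nat) (z : {ffun 'I_m -> bool}) : R :=
  \prod_(i < m) (if z i then p else 1 - p).

Definition two_to_one (n : nat) : {set {ffun 'I_(2 * n) -> 'I_n}} :=
  [set f : {ffun 'I_(2 * n) -> 'I_n} | [forall j : 'I_n, #|[set i | f i == j]| == 2%N]].

(* D_{p,2n}(z): probability that z = x o pi with pi uniform 2-to-1 and x ~ mu_{p,n}. *)
Definition pullback (R : realType) (p : R) (n : nat) (z : {ffun 'I_(2 * n) -> bool}) : R :=
  (#|two_to_one n|%:R)^-1 *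
  \sum_(f in two_to_one n)
     \sum_(x : {ffun 'I_n -> bool} | [ffun i => x (f i)] == z) mu p x.

From HB Require Import structures.
From mathcomp Require Import all_boot all_order all_algebra all_fingroup.
From mathcomp Require Import reals.
From mathcomp Require Import zify ring lra.
Import Order.TTheory GRing.Theory Num.Theory.
Local Open Scope ring_scope.
Set Implicit Arguments. Unset Strict Implicit. Unset Printing Implicit Defensive.

(* Relabelling the 2n coordinates permutes the 2-to-1 maps, so D_{p,2n}(z)
   depends only on the weight of z; and x o pi has twice the weight of x.
   Summing over the C(2n,2k) strings of weight 2k thus gives
   C(2n,2k) D(z) = b_k, where b_j = P[Bin(n,p) = j], whereas
   C(2n,2k) mu(z) = P[Bin(2n,p) = 2k] = sum_j b_j b_(2k-j) by Vandermonde.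
   Log-concavity of the binomial coefficients gives b_j b_(2k-j) <= b_k^2,
   hence b_j b_(2k-j) <= b_k (b_j + b_(2k-j)), and summing over j bounds
   the convolution by 2 b_k.  So C = 1/2 works. *)

Lemma leq_bin_shift n a c : (a <= c)%N ->
  ('C(n, a) * 'C(n, c.+1) <= 'C(n, a.+1) * 'C(n, c))%N.
Proof.
move=> le_ac; rewrite -(@leq_pmul2r (a.+1 * c.+1)) //.
have -> : ('C(n, a) * 'C(n, c.+1) * (a.+1 * c.+1)
           = (a.+1 * (n - c)) * ('C(n, a) * 'C(n, c)))%N.
  by transitivity (a.+1 * 'C(n, a) * (c.+1 * 'C(n, c.+1)))%N;
    [ring | rewrite mul_bin_left; ring].
have -> : ('C(n, a.+1) * 'C(n, c) * (a.+1 * c.+1)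
           = ((n - a) * c.+1) * ('C(n, a) * 'C(n, c)))%N.
  by transitivity (a.+1 * 'C(n, a.+1) * (c.+1 * 'C(n, c)))%N;
    [ring | rewrite mul_bin_left; ring].
by rewrite leq_mul2r [(_ * c.+1)%N]mulnC leq_mul ?orbT //; lia.
Qed.

Lemma leq_bin_sym_mul n k d : (d <= k)%N ->
  ('C(n, k - d) * 'C(n, k + d) <= 'C(n, k) * 'C(n, k))%N.
Proof.
elim: d => [|d IHd] le_dk; first by rewrite subn0 addn0.
apply: leq_trans (IHd (ltnW le_dk)).
have -> : (k - d = (k - d.+1).+1)%N by lia.
by rewrite addnS leq_bin_shift //; lia.
Qed.

Lemma leq_bin_log_concave n k j : (j <= k.*2)%N ->
  ('C(n, j) * 'C(n, k.*2 - j) <= 'C(n, k) * 'C(n, k))%N.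
Proof.
move=> le_jk2; have [le_jk | lt_kj] := leqP j k.
  have := @leq_bin_sym_mul n k (k - j) (leq_subr _ _).
  by rewrite subKn // -addnn -addnBA.
have -> : (k.*2 - j = k - (j - k))%N by lia.
by rewrite mulnC -{2}(subnKC (ltnW lt_kj)) leq_bin_sym_mul //; lia.
Qed.

Lemma mul_le_mulD_of_le_sqr (R : realDomainType) (x y c : R) :
  0 <= x -> 0 <= y -> 0 <= c -> x * y <= c * c -> x * y <= c * (x + y).
Proof.
move=> x_ge0 y_ge0 c_ge0 xy_le; rewrite mulrDr.
have [le_xc | /ltW le_cx] := lerP x c.
  by rewrite ler_wpDl ?mulr_ge0 ?ler_wpM2r.
by rewrite ler_wpDr ?mulr_ge0 // (le_trans xy_le) ?ler_wpM2l.
Qed.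

Section BinomialPmf.

Variables (R : realDomainType) (p : R).
Hypothesis p01 : 0 <= p <= 1.

Definition bin_pmf n j : R := 'C(n, j)%:R * (p ^+ j * (1 - p) ^+ (n - j)).

Lemma bin_pmf_ge0 n j : 0 <= bin_pmf n j.
Proof.
by case/andP: p01 => p_ge0 p_le1; rewrite !mulr_ge0 ?exprn_ge0 ?subr_ge0.
Qed.

Lemma sum_bin_pmf n : \sum_(j < n.+1) bin_pmf n j = 1.
Proof.
rewrite -(expr1n _ n) -(subrK p 1) exprDn.
by apply: eq_bigr => j _; rewrite /bin_pmf mulr_natl mulrC.
Qed.

Lemma sum_bin_pmf_le1 n m : \sum_(j < m) bin_pmf n j <= 1.
Proof.
rewrite -(sum_bin_pmf n) (big_ord_widen (maxn m n.+1) _ (leq_maxl _ _)).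
rewrite [X in _ <= X](big_ord_widen (maxn m n.+1) _ (leq_maxr _ _)).
rewrite big_mkcond [X in _ <= X]big_mkcond; apply: ler_sum => j _ /=.
rewrite ltnS; have [le_jn | lt_nj] := leqP j n.
  by case: ifP => _ //; exact: bin_pmf_ge0.
by rewrite /bin_pmf bin_small // mul0r; case: ifP.
Qed.

Lemma bin_pmf_mulE m n c j : (j <= c)%N ->
  bin_pmf m j * bin_pmf n (c - j) =
  ('C(m, j) * 'C(n, c - j))%:R * (p ^+ c * (1 - p) ^+ (m + n - c)).
Proof.
move=> le_jc; rewrite /bin_pmf natrM.
have [lt_mj | le_jm] := ltnP m j; first by rewrite bin_small // !mul0r.
have [lt_n | le_n] := ltnP n (c - j).
  by rewrite (bin_small lt_n) !(mul0r, mulr0).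
rewrite -[in p ^+ c](subnKC le_jc) exprD.
have -> : (m + n - c = (m - j) + (n - (c - j)))%N by lia.
by rewrite exprD; ring.
Qed.

Lemma bin_pmf_addn m n c :
  bin_pmf (m + n) c = \sum_(j < c.+1) bin_pmf m j * bin_pmf n (c - j).
Proof.
rewrite {1}/bin_pmf -binomial.Vandermonde natr_sum mulr_suml.
by apply: eq_bigr => j _; rewrite bin_pmf_mulE // -ltnS.
Qed.

Lemma bin_pmf_log_concave n k j : (j <= k.*2)%N ->
  bin_pmf n j * bin_pmf n (k.*2 - j) <= bin_pmf n k * bin_pmf n k.
Proof.
move=> le_jk2; have k2Bk : (k.*2 - k = k)%N by rewrite -addnn addnK.
have le_kk2 : (k <= k.*2)%N by rewrite -addnn leq_addr.
rewrite -{3}k2Bk !bin_pmf_mulE ?k2Bk //; apply: ler_wpM2r.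
  by case/andP: p01 => p_ge0 p_le1; rewrite mulr_ge0 ?exprn_ge0 ?subr_ge0.
by rewrite ler_nat leq_bin_log_concave.
Qed.

Lemma bin_pmf_double_le n k : bin_pmf n.*2 k.*2 <= 2 * bin_pmf n k.
Proof.
rewrite -[n.*2]addnn bin_pmf_addn.
apply: (@le_trans _ _
  (\sum_(j < k.*2.+1) bin_pmf n k * (bin_pmf n j + bin_pmf n (k.*2 - j)))).
  apply: ler_sum => j _; have le_jk2 : (j <= k.*2)%N by rewrite -ltnS.
  by rewrite mul_le_mulD_of_le_sqr ?bin_pmf_ge0 ?bin_pmf_log_concave.
rewrite -mulr_sumr big_split /=.
have -> : \sum_(j < k.*2.+1) bin_pmf n (k.*2 - j) =
          \sum_(j < k.*2.+1) bin_pmf n j.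
  rewrite (reindex_inj rev_ord_inj); apply: eq_bigr => j _ /=; congr bin_pmf.
  have := ltn_ord j; lia.
rewrite mulrC ler_wpM2r ?bin_pmf_ge0 //.
by rewrite -[2]/(1 + 1) lerD ?sum_bin_pmf_le1.
Qed.

End BinomialPmf.

Lemma perm_eq_bool (s t : seq bool) :
  size s = size t -> count id s = count id t -> perm_eq s t.
Proof.
move=> eq_size eq_count_id.
have count_true u : count_mem true u = count id u.
  by apply: eq_count => b; rewrite /= eqb_id.
have count_false u : count_mem false u = (size u - count id u)%N.
  by rewrite -(count_predC id u) addKn; apply: eq_count => b; rewrite /= eqbF_neg.
by apply/allP => -[] _; rewrite /= ?count_true ?count_false ?eq_size eq_count_id.
Qed.

Lemma count_enum_card (T : finType) (a : pred T) :
  count a (enum T) = #|[set x | a x]|.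
Proof. by rewrite -sum1_count big_enum_cond sum1dep_card. Qed.

Lemma perm_ffun_of_card m (w z : {ffun 'I_m -> bool}) :
  #|[set i | w i]| = #|[set i | z i]| -> exists s : 'S_m, w = [ffun i => z (s i)].
Proof.
move=> eq_card.
have : perm_eq [seq w i | i <- enum 'I_m] [seq z i | i <- enum 'I_m].
  rewrite perm_eq_bool ?size_map //.
  by rewrite [LHS]count_map [RHS]count_map !count_enum_card.
case/(@tuple_permP _ _ _ [tuple z i | i < m]) => s ws; exists s; apply/ffunP => i.
have /eq_in_map ws_pt :
    [seq w i | i <- enum 'I_m] = [seq z (s i) | i <- enum 'I_m].
  by rewrite ws; apply: eq_map => j; rewrite tnth_mktuple.
by rewrite ws_pt ?mem_enum // ffunE.
Qed.

Lemma card_ffun_weight m k :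
  #|[set x : {ffun 'I_m -> bool} | #|[set i | x i]| == k]| = 'C(m, k).
Proof.
have -> : [set x : {ffun 'I_m -> bool} | #|[set i | x i]| == k] =
          [set [ffun i => i \in (B : {set 'I_m})]
          | B in [set B : {set 'I_m} | #|B| == k]].
  apply/setP => x; rewrite inE; apply/idP/imsetP => [wt_x | [B]].
    by exists [set i | x i]; rewrite ?inE //; apply/ffunP => i; rewrite ffunE inE.
  rewrite inE => card_B ->; rewrite (_ : [set i | _] = B) //.
  by apply/setP => i; rewrite inE ffunE.
rewrite card_imset ?card_draws ?card_ord // => B1 B2 /ffunP eq_B.
by apply/setP => i; have := eq_B i; rewrite !ffunE.
Qed.

Lemma card_comp_two_to_one n
    (f : {ffun 'I_(2 * n) -> 'I_n}) (x : {ffun 'I_n -> bool}) :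
  f \in two_to_one n -> #|[set i | x (f i)]| = #|[set j | x j]|.*2.
Proof.
rewrite inE => /forallP fibre2.
rewrite -sum1dep_card (partition_big f (fun j => x j)) // -sum1dep_card -mul2n.
rewrite big_distrr /=; apply: eq_bigr => j x_j; rewrite muln1.
apply: etrans (eqP (fibre2 j)).
rewrite -sum1dep_card; apply: eq_bigl => i.
by case: eqP => [-> | _]; rewrite ?x_j ?andbF.
Qed.

Lemma two_to_one_neq0 n : two_to_one n != set0.
Proof.
apply/set0Pn; case: n => [|n].
  by exists [ffun i => cast_ord (muln0 2) i]; rewrite inE; apply/forallP => -[].
pose f := [ffun i : 'I_(2 * n.+1) =>
  inord (if (i < n.+1)%N then val i else i - n.+1)%N : 'I_n.+1].
exists f; rewrite inE; apply/forallP => j; have lt_jn := ltn_ord j.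
have lt_j : (j < 2 * n.+1)%N by lia.
have lt_jSn : (j + n.+1 < 2 * n.+1)%N by lia.
rewrite (_ : [set i | f i == j] = [set Ordinal lt_j; Ordinal lt_jSn]).
  by rewrite cards2 -val_eqE /=; apply/eqP; lia.
apply/setP => i; have lt_i := ltn_ord i.
rewrite !inE ffunE -!val_eqE /= inordK; last by case: ifP; lia.
by case: ltnP => ?; apply/eqP/orP => [? | [] /eqP]; lia.
Qed.

Lemma mem_two_to_one_perm n (s : 'S_(2 * n)) (f : {ffun 'I_(2 * n) -> 'I_n}) :
  ([ffun i => f (s i)] \in two_to_one n) = (f \in two_to_one n).
Proof.
rewrite !inE; apply: eq_forallb => j.
suff -> : [set i | [ffun i => f (s i)] i == j] = s @^-1: [set i | f i == j].
  by rewrite card_preimset //; exact: perm_inj.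
by apply/setP => i; rewrite !inE ffunE.
Qed.

Section Pullback.

Variables (R : realType) (p : R).

Lemma mu_weight m (w : {ffun 'I_m -> bool}) :
  mu p w = p ^+ #|[set i | w i]| * (1 - p) ^+ (m - #|[set i | w i]|).
Proof.
rewrite /mu (bigID w) /=.
rewrite [X in X * _](eq_bigr (fun=> p)) => [|i ->] //.
rewrite [X in _ * X](eq_bigr (fun=> 1 - p)) => [|i /negbTE ->] //.
rewrite !prodr_const cardsE; congr (_ * _ ^+ _).
transitivity #|~: [set i | w i]|; first by apply: eq_card => i; rewrite !inE.
by rewrite cardsCs setCK card_ord cardsE.
Qed.

Lemma sum_mu_weight m k :
  \sum_(x : {ffun 'I_m -> bool} | #|[set i | x i]| == k) mu p x = bin_pmf p m k.
Proof.
rewrite (eq_bigr (fun=> p ^+ k * (1 - p) ^+ (m - k))) => [|x /eqP <-].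
  by rewrite sumr_const /bin_pmf mulr_natl -card_ffun_weight cardsE.
exact: mu_weight.
Qed.

Lemma pullback_perm n (s : 'S_(2 * n)) (z : {ffun 'I_(2 * n) -> bool}) :
  pullback p [ffun i => z (s i)] = pullback p z.
Proof.
rewrite /pullback; congr (_ * _).
rewrite (reindex (fun f : {ffun 'I_(2 * n) -> 'I_n} => [ffun i => f (s i)])) /=.
  apply: eq_big => [f | f _]; first exact: mem_two_to_one_perm.
  apply: eq_bigl => x; apply/eqP/eqP => [/ffunP eq_s | <-]; apply/ffunP => i.
    by have := eq_s ((s^-1)%g i); rewrite !ffunE permKV.
  by rewrite !ffunE.
exists (fun f => [ffun i => f ((s^-1)%g i)]) => f _.
  by apply/ffunP => i; rewrite !ffunE permKV.
by apply/ffunP => i; rewrite !ffunE permK.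
Qed.

Lemma pullback_eq_of_card n (w z : {ffun 'I_(2 * n) -> bool}) :
  #|[set i | w i]| = #|[set i | z i]| -> pullback p w = pullback p z.
Proof. by case/perm_ffun_of_card => s ->; exact: pullback_perm. Qed.

Lemma sum_pullback_weight n k :
  \sum_(w : {ffun 'I_(2 * n) -> bool} | #|[set i | w i]| == k.*2) pullback p w =
  bin_pmf p n k.
Proof.
rewrite /pullback -mulr_sumr exchange_big /=.
rewrite (eq_bigr (fun=> bin_pmf p n k)) => [|f f_T].
  rewrite sumr_const -[bin_pmf p n k *+ _]mulr_natl mulKf //.
  by rewrite pnatr_eq0 -lt0n card_gt0 two_to_one_neq0.
rewrite (exchange_big_dep xpredT) //= -sum_mu_weight [RHS]big_mkcond.
apply: eq_bigr => x _.
rewrite big_mkcondl (eq_bigl _ _ (fun w => eq_sym _ w)) big_pred1_eq.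
suff -> : #|[set i | [ffun i => x (f i)] i]| = #|[set j | x j]|.*2.
  by rewrite (inj_eq double_inj).
by rewrite -(card_comp_two_to_one x f_T); apply: eq_card => i; rewrite !inE ffunE.
Qed.

Lemma pullback_weightE n k (z : {ffun 'I_(2 * n) -> bool}) :
  #|[set i | z i]| = k.*2 -> 'C(2 * n, k.*2)%:R * pullback p z = bin_pmf p n k.
Proof.
move=> wt_z; rewrite -sum_pullback_weight.
rewrite (eq_bigr (fun=> pullback p z)) => [|w /eqP].
  by rewrite sumr_const mulr_natl -card_ffun_weight cardsE.
by rewrite -wt_z; exact: pullback_eq_of_card.
Qed.

End Pullback.

Theorem mainTheorem2 (R : realType) :
  exists C : R, 0 < C /\
    forall (p : R), 0 < p < 1 ->
    forall (n : nat), (0 < n)%N ->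
    forall z : {ffun 'I_(2 * n) -> bool},
      ~~ odd #|[set i | z i]| ->
      C * mu p z <= pullback p z.
Proof.
exists 2^-1; split => [|p /andP[p_gt0 p_lt1] n _ z even_z].
  by rewrite invr_gt0 ltr0n.
have p01 : 0 <= p <= 1 by rewrite !ltW.
set k := #|[set i | z i]|./2.
have wt_z : #|[set i | z i]| = k.*2 by rewrite even_halfK.
have le_kn : (k <= n)%N.
  by have := max_card [set i | z i]; rewrite card_ord wt_z mul2n leq_double.
have C_gt0 : 0 < 'C(2 * n, k.*2)%:R :> R.
  by rewrite ltr0n bin_gt0 mul2n leq_double.
have mu_z : 'C(2 * n, k.*2)%:R * mu p z = bin_pmf p n.*2 k.*2.
  by rewrite mu_weight wt_z mul2n.
have double_le := bin_pmf_double_le p01 n k.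
by rewrite -(ler_pM2l C_gt0) mulrCA mu_z pullback_weightE //; lra.
Qed.
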